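(* Let $R$ be a commutative Bezout domain and $A,B\in M_n(R)$. Then there exists an invertible $2n\times 2n$ matrix $F$ over $R$ such that $$\begin{pmatrix} A & B\\ 0 & B\end{pmatrix}F=\begin{pmatrix} D & 0\\ * & M\end{pmatrix},$$ where $D$ is a left greatest common divisor of $A$ and $B$ and $M$ is a right least common multiple of $A$ and $B$ (here $*$ denotes some $n\times n$ matrix).
   Context: A commutative Bezout domain is a commutative integral domain with $1\ne0$ in which every finitely generated ideal is principal. For $A,B\in M_n(R)$: $D$ is a left common divisor of $A,B$ if $A=DA_1$, $B=DB_1$ for some $A_1,B_1\in M_n(R)$; $D$ is a left greatest common divisor if moreover every left common divisor $D'$ of $A,B$ is a left divisor of $D$ (i.e. $D=D'C$ for some $C$). $M$ is a right common multiple of $A,B$ if $M=AP=BQ$ for some $P,Q\in M_n(R)$; it is a right least common multiple if moreover $M$ is a left divisor of every right common multiple of $A$ and $B$. *)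

From mathcomp Require Import all_boot all_algebra.
Set Implicit Arguments. Unset Strict Implicit. Unset Printing Implicit Defensive.
Import GRing.Theory.
Local Open Scope ring_scope.

(* A commutative Bezout domain: an integral domain (idomainType, so 1 != 0)
   in which every finitely generated ideal is principal. *)
Definition bezout_domain (R : idomainType) : Prop :=
  forall (k : nat) (a : 'I_k -> R), exists d : R,
    forall x : R, (exists c : 'I_k -> R, x = \sum_(i < k) c i * a i)
                  <-> (exists y : R, x = y * d).

Definition left_divisor (R : idomainType) (n : nat) (D A : 'M[R]_n) : Prop :=
  exists C : 'M[R]_n, A = D *m C.

Definition left_common_divisor (R : idomainType) (n : nat) (A B D : 'M[R]_n) : Prop :=
  left_divisor D A /\ left_divisor D B.

Definition left_gcd (R : idomainType) (n : nat) (A B D : 'M[R]_n) : Prop :=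
  left_common_divisor A B D /\
  forall D' : 'M[R]_n, left_common_divisor A B D' -> left_divisor D' D.

Definition right_common_multiple (R : idomainType) (n : nat) (A B M : 'M[R]_n) : Prop :=
  exists P Q : 'M[R]_n, M = A *m P /\ M = B *m Q.

Definition right_lcm (R : idomainType) (n : nat) (A B M : 'M[R]_n) : Prop :=
  right_common_multiple A B M /\
  forall M' : 'M[R]_n, right_common_multiple A B M' -> left_divisor M M'.

(* Over a Bezout domain, a unimodular 2x2 column operation built from a Bezout
   relation d = x a + y b replaces two entries a, b of a row by d and 0.
   Sweeping the rows one at a time gives a column echelon form: every row adds
   at most one pivot column, pivots are taken in a prescribed order of the
   columns, the remaining free columns vanish on the processed rows, and every
   vector in the kernel is supported on the free columns.
   With the pivots pushed to the left this gives [A B] F1 = [D 0], and D is a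
   left gcd of A and B because F1 is invertible. A second sweep acts only on
   the free columns of [A B] F1, hence does not change it, and pushes the
   pivots of [0 B] F1 to the right; in the result [0 B] F = [X M] the block X
   vanishes on every column that can carry a vector of ker D. So ker D lies in
   ker X, and for a common right multiple A P = B Q the kernel vector
   F^-1 (P; -Q) of [A B] exhibits B Q as M times a matrix. *)

From mathcomp Require Import all_boot all_algebra ring zify.
Set Implicit Arguments. Unset Strict Implicit. Unset Printing Implicit Defensive.
Import GRing.Theory.
Local Open Scope ring_scope.

Section Support.
Variable R : pzRingType.

Definition id_outside k (Z : {set 'I_k}) (U : 'M[R]_k) :=
  forall i j, (i \notin Z) || (j \notin Z) -> U i j = (i == j)%:R.

Definition supported k c (Z : {set 'I_k}) (v : 'M[R]_(k, c)) :=
  forall j x, j \notin Z -> v j x = 0.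

Lemma sum_mul_delta k (i : 'I_k) (F : 'I_k -> R) : \sum_l F l * (l == i)%:R = F i.
Proof.
rewrite (bigD1 i) //= eqxx mulr1 big1 ?addr0 // => l /negbTE ->.
by rewrite mulr0.
Qed.

Lemma id_outside1 k (Z : {set 'I_k}) : id_outside Z 1%:M.
Proof. by move=> i j _; rewrite mxE. Qed.

Lemma id_outsideS k (Z1 Z2 : {set 'I_k}) (U : 'M[R]_k) :
  Z1 \subset Z2 -> id_outside Z1 U -> id_outside Z2 U.
Proof.
move=> sZ iU i j nZ2; apply: iU.
by case/orP: nZ2 => nZ; apply/orP; [left | right]; apply: contra nZ; apply: subsetP.
Qed.

Lemma mulmx_id_outside_col m k (Z : {set 'I_k}) (U : 'M[R]_k) (C : 'M[R]_(m, k)) i j :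
  id_outside Z U -> j \notin Z -> (C *m U) i j = C i j.
Proof.
move=> iU jZ; rewrite mxE -[RHS](sum_mul_delta j (C i)).
by apply: eq_bigr => l _; rewrite iU // jZ orbT.
Qed.

Lemma id_outside_mulmx_row c k (Z : {set 'I_k}) (U : 'M[R]_k) (v : 'M[R]_(k, c)) j x :
  id_outside Z U -> j \notin Z -> (U *m v) j x = v j x.
Proof.
move=> iU jZ; rewrite mxE (bigD1 j) //= iU ?jZ // eqxx mul1r big1 ?addr0 //.
by move=> l /negbTE lj; rewrite iU ?jZ // eq_sym lj mul0r.
Qed.

Lemma supported_id_outside_mulmx c k (Z T : {set 'I_k}) (U : 'M[R]_k) (v : 'M[R]_(k, c)) :
  id_outside Z U -> Z \subset T -> supported T (U *m v) <-> supported T v.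
Proof.
move=> iU ZT; have Uv j x : j \notin T -> (U *m v) j x = v j x.
  by move=> jT; apply: id_outside_mulmx_row iU _; apply: contra jT; apply: subsetP.
by split=> vT j x jT; [rewrite -(Uv _ _ jT) | rewrite (Uv _ _ jT)]; apply: vT.
Qed.

Lemma id_outsideM k (Z : {set 'I_k}) (U V : 'M[R]_k) :
  id_outside Z U -> id_outside Z V -> id_outside Z (U *m V).
Proof.
move=> iU iV i j /orP[] nZ.
  by rewrite (id_outside_mulmx_row V j iU nZ) iV ?nZ.
by rewrite (mulmx_id_outside_col U i iV nZ) iU ?nZ ?orbT.
Qed.

Lemma mulmx_id_outside_zero m k (Z : {set 'I_k}) (U : 'M[R]_k) (C : 'M[R]_(m, k)) i :
  id_outside Z U -> (forall j, j \in Z -> C i j = 0) ->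
  forall j, j \in Z -> (C *m U) i j = 0.
Proof.
move=> iU C0 j jZ; rewrite mxE big1 // => l _.
have [lZ | lZ] := boolP (l \in Z); first by rewrite C0 // mul0r.
by rewrite iU ?lZ //; case: eqP lZ => [-> /negP // | _ _]; rewrite mulr0.
Qed.

End Support.

Section TwoByTwo.
Variables (R : pzRingType) (k : nat) (p q : 'I_k).
Hypothesis npq : p != q.

Definition mx2 (a b c d : R) : 'M[R]_k :=
  \matrix_(i, j) if i == p then (if j == p then a else if j == q then b else 0)
                 else if i == q then (if j == p then c else if j == q then d else 0)
                 else (i == j)%:R.

Lemma id_outside_mx2 a b c d : id_outside [set p; q] (mx2 a b c d).
Proof.
move=> i j; rewrite !inE mxE => /orP[]/norP[/negbTE xp /negbTE xq].
  by rewrite xp xq.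
rewrite xp xq; have [-> | _] := eqVneq i p; first by rewrite [p == j]eq_sym xp.
by have [-> | _] := eqVneq i q; first by rewrite [q == j]eq_sym xq.
Qed.

Lemma mulmx_mx2E m (N : 'M[R]_(m, k)) a b c d i j :
  (N *m mx2 a b c d) i j =
  if j == p then N i p * a + N i q * c
  else if j == q then N i p * b + N i q * d else N i j.
Proof.
have nqp : (q == p) = false by rewrite eq_sym (negbTE npq).
rewrite mxE; have [jp | njp] := eqVneq j p; last have [jq | njq] := eqVneq j q.
- rewrite (bigD1 p) //= (bigD1 q) 1?eq_sym //= !mxE jp !eqxx nqp big1 ?addr0 //.
  by move=> l /andP[/negbTE lp /negbTE lq]; rewrite mxE lp lq mulr0.
- rewrite (bigD1 p) //= (bigD1 q) 1?eq_sym //= !mxE jq !eqxx nqp big1 ?addr0 //.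
  by move=> l /andP[/negbTE lp /negbTE lq]; rewrite mxE lp lq mulr0.
rewrite -(sum_mul_delta j (N i)); apply: eq_bigr => l _.
rewrite mxE (negbTE njp) (negbTE njq).
have [-> | _] := eqVneq l p; first by rewrite [p == j]eq_sym (negbTE njp).
by have [-> | _] := eqVneq l q; first by rewrite [q == j]eq_sym (negbTE njq).
Qed.

Lemma mx2_mul a b c d a' b' c' d' :
  mx2 a b c d *m mx2 a' b' c' d' =
  mx2 (a * a' + b * c') (a * b' + b * d') (c * a' + d * c') (c * b' + d * d').
Proof.
have nqp : (q == p) = false by rewrite eq_sym (negbTE npq).
apply/matrixP => i j; rewrite mulmx_mx2E [RHS]mxE !mxE !eqxx nqp.
have [-> | jp] := eqVneq j p; last have [-> | jq] := eqVneq j q.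
- have [// | ip] := eqVneq i p.
  by have [// | iq] := eqVneq i q; rewrite !mul0r addr0.
- have [// | ip] := eqVneq i p.
  by have [// | iq] := eqVneq i q; rewrite !mul0r addr0.
by have [// | ip] := eqVneq i p; have [// | iq] := eqVneq i q.
Qed.

Lemma mx2_1 : mx2 1 0 0 1 = 1%:M.
Proof.
have nqp : (q == p) = false by rewrite eq_sym (negbTE npq).
apply/matrixP => i j; rewrite !mxE.
have [-> | ip] := eqVneq i p.
  by have [// | jp] := eqVneq j p; case: (j == q).
have [-> | iq] := eqVneq i q.
  have [-> | jp] := eqVneq j p; first by rewrite nqp.
  by have [// | jq] := eqVneq j q.
by have [// | jp] := eqVneq j p; have [// | jq] := eqVneq j q.
Qed.

End TwoByTwo.

Section RowReduction.
Variables (R : idomainType) (hR : bezout_domain R) (m k : nat).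

Lemma bezout2 (a b : R) :
  exists x y a' b' d : R, [/\ a = d * a', b = d * b' & d = x * a + y * b].
Proof.
pose f (i : 'I_2) := if val i == 0%N then a else b.
have sum2 (c : 'I_2 -> R) : \sum_(i < 2) c i * f i = c ord0 * a + c ord_max * b.
  rewrite big_ord_recl big_ord1.
  by have -> : lift ord0 (ord0 : 'I_1) = ord_max :> 'I_2 by apply: val_inj.
have [d Hd] := hR f.
have [c Hc] := (Hd d).2 (ex_intro _ 1 (esym (mul1r d))).
have [a' Ha] : exists y, a = y * d.
  by apply/(Hd a).1; exists (fun i => (val i == 0%N)%:R); rewrite sum2 /= mul1r mul0r addr0.
have [b' Hb] : exists y, b = y * d.
  by apply/(Hd b).1; exists (fun i => (val i != 0%N)%:R); rewrite sum2 /= mul1r mul0r add0r.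
exists (c ord0), (c ord_max), a', b', d.
by split; [rewrite Ha mulrC | rewrite Hb mulrC | rewrite Hc sum2].
Qed.

Lemma col_clear2 (N : 'M[R]_(m, k)) i0 p q : p != q ->
  exists V, [/\ V \in unitmx, id_outside [set p; q] V & (N *m V) i0 q = 0].
Proof.
move=> npq; have [x [y [a' [b' [d [Ha Hb Hd]]]]]] := bezout2 (N i0 p) (N i0 q).
have [d0 | dn0] := eqVneq d 0.
  by exists 1%:M; rewrite unitmx1 mulmx1 Hb d0 mul0r; split=> //; apply: id_outside1.
have bez1 : x * a' + y * b' = 1.
  by apply: (mulfI dn0); rewrite mulr1 {2}Hd Ha Hb; ring.
exists (mx2 p q x (- b') y a'); split; last first.
- by rewrite mulmx_mx2E // eqxx eq_sym (negbTE npq) Ha Hb; ring.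
- exact: id_outside_mx2.
suff /mulmx1_unit[] : mx2 p q x (- b') y a' *m mx2 p q a' b' (- y) x = 1%:M by [].
by rewrite mx2_mul // -(mx2_1 _ npq); congr mx2; rewrite -?bez1; ring.
Qed.

Lemma row_clear (N : 'M[R]_(m, k)) i0 p (s : seq 'I_k) : p \notin s ->
  exists V, [/\ V \in unitmx, id_outside (p |: [set j in s]) V &
                forall j, j \in s -> (N *m V) i0 j = 0].
Proof.
elim: s => [_ | q s IHs].
  by exists 1%:M; rewrite unitmx1; split=> //; apply: id_outside1.
rewrite inE negb_or => /andP[npq ps]; have [V [uV iV zV]] := IHs ps.
have [W [uW iW zW]] := col_clear2 (N *m V) i0 npq.
exists (V *m W); split.
- by rewrite unitmx_mul uV.
- apply: id_outsideM; [apply: id_outsideS iV | apply: id_outsideS iW];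
    by apply/subsetP => j; rewrite !inE => /orP[] ->; rewrite ?orbT.
move=> j; rewrite mulmxA inE; have [-> _ | njq /= js] := eqVneq j q; first exact: zW.
rewrite (mulmx_id_outside_col _ _ iW) ?zV // !inE negb_or njq andbT.
by apply: contraNneq ps => <-.
Qed.

Lemma row_concentrate (N : 'M[R]_(m, k)) i0 (Z : {set 'I_k}) (w : 'I_k -> nat) :
  exists V, [/\ V \in unitmx, id_outside Z V &
    forall j l, j \in Z -> l \in Z -> l != j -> (N *m V) i0 j != 0 ->
      (N *m V) i0 l = 0 /\ (w j <= w l)%N].
Proof.
have [-> | [j0 j0Z]] := set_0Vmem Z.
  exists 1%:M; split=> [|| j l]; rewrite ?in_set0 //; [exact: unitmx1 | exact: id_outside1].
pose p := [arg min_(j < j0 in Z) w j].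
have [pZ pmin] : p \in Z /\ forall l, l \in Z -> (w p <= w l)%N.
  by rewrite /p; case: arg_minnP.
have [|V [uV iV zV]] := row_clear N i0 (s := enum (Z :\ p)) (p := p).
  by rewrite mem_enum setD11.
rewrite set_enum setD1K // in iV.
exists V; split=> // j l jZ lZ lj nzj.
have jp : j = p.
  by apply: contraTeq nzj => jp; rewrite negbK; apply/eqP/zV; rewrite mem_enum !inE jp.
rewrite jp in lj *; split; last exact: pmin.
by apply: zV; rewrite mem_enum !inE lj.
Qed.

End RowReduction.

Lemma card_setD_shrink (X : finType) (T Z Z' : {set X}) :
  (#|Z :\: Z'| <= 1 -> #|T :\: Z'| <= #|T :\: Z|.+1)%N.
Proof.
move=> le1; have sub : T :\: Z' \subset (Z :\: Z') :|: (T :\: Z).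
  by apply/subsetP => j; rewrite !inE => /andP[-> ->]; rewrite /= andbT orbN.
rewrite (leq_trans (subset_leq_card sub)) // (leq_trans (leq_card_setU _ _)) //.
by rewrite -add1n leq_add.
Qed.

Lemma card_lt_pivots (X : finType) (T Z G : {set X}) (w : X -> nat) j0 :
  (forall j l, j \in T :\: Z -> l \in Z -> (w j <= w l)%N) ->
  j0 \in T :\: Z -> G \subset T -> (forall l, l \in G -> (w l < w j0)%N) ->
  (#|G| < #|T :\: Z|)%N.
Proof.
move=> order j0P GT Glt.
have sub : j0 |: G \subset T :\: Z.
  apply/subsetP => l; rewrite in_setU1 => /predU1P[-> // | lG].
  rewrite inE (subsetP GT _ lG) andbT; apply/negP => lZ.
  by have := order _ _ j0P lZ; rewrite leqNgt Glt.
have j0G : j0 \notin G by apply/negP => /Glt; rewrite ltnn.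
by have := subset_leq_card sub; rewrite cardsU1 j0G.
Qed.

Section Echelon.
Variables (R : idomainType) (hR : bezout_domain R) (m k : nat).
Variables (C : 'M[R]_(m, k)) (T : {set 'I_k}) (w : 'I_k -> nat).

(* After processing the rows [s], the columns [T :\: Z] are pivots and the
   columns [Z] are free; [w] ranks the columns by priority for becoming pivots. *)
Record echelon_form (s : seq 'I_m) (U : 'M[R]_k) (Z : {set 'I_k}) : Prop := EchelonForm {
  echelon_unit : U \in unitmx;
  echelon_id_outside : id_outside T U;
  echelon_free_sub : Z \subset T;
  echelon_free_zero : forall i j, i \in s -> j \in Z -> (C *m U) i j = 0;
  echelon_pivots_card : (#|T :\: Z| <= size s)%N;
  echelon_pivots_first : forall j l, j \in T :\: Z -> l \in Z -> (w j <= w l)%N;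
  echelon_kernel : forall c (v : 'M[R]_(k, c)), supported T v ->
    (forall i x, i \in s -> (C *m U *m v) i x = 0) -> supported Z v }.

Lemma echelon_nil : echelon_form [::] 1%:M T.
Proof.
split=> //; [exact: unitmx1 | exact: id_outside1 | by rewrite setDv cards0 |].
by move=> j l; rewrite setDv inE.
Qed.

Lemma echelon_cons s U Z i0 :
  echelon_form s U Z -> exists U' Z', echelon_form (i0 :: s) U' Z'.
Proof.
case=> uU iU ZT zU cZ oZ kZ.
have [V [uV iV conc]] := row_concentrate hR (C *m U) i0 Z w.
set N := C *m U *m V.
pose Z' := [set j in Z | N i0 j == 0].
have Z'Z : Z' \subset Z by apply/subsetP => j; rewrite inE => /andP[].
have pivot j : j \in Z :\: Z' ->
    N i0 j != 0 /\ forall l, l \in Z -> l != j -> N i0 l = 0 /\ (w j <= w l)%N.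
  rewrite !inE => /andP[nzj jZ]; rewrite jZ /= in nzj.
  by split=> // l lZ lj; apply: conc.
have vZ c (v : 'M[R]_(k, c)) : supported T v ->
    (forall i x, i \in i0 :: s -> (N *m v) i x = 0) -> supported Z v.
  move=> vT vs; apply/(supported_id_outside_mulmx v iV (subxx Z)).
  apply: kZ => [| i y iS]; first exact/(supported_id_outside_mulmx v iV ZT).
  by rewrite mulmxA; apply: vs; rewrite inE iS orbT.
exists (U *m V), Z'; split.
- by rewrite unitmx_mul uU.
- exact: id_outsideM (id_outsideS ZT iV).
- exact: subset_trans Z'Z ZT.
- move=> i j; rewrite inE mulmxA -/N => /orP[/eqP -> | iS] jZ'.
    by move: jZ'; rewrite inE => /andP[_ /eqP].
  by apply: mulmx_id_outside_zero iV _ _ (subsetP Z'Z _ jZ') => l lZ; apply: zU.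
- have le1 : (#|Z :\: Z'| <= 1)%N.
    apply/card_le1_eqP => j l jP lP.
    have [[_ cj] [nzl _]] := (pivot j jP, pivot l lP).
    apply/eqP; apply: contraTT nzl => lj; rewrite negbK; apply/eqP/(cj l _ lj).1.
    by move: lP; rewrite inE => /andP[].
  by rewrite (leq_trans (card_setD_shrink T le1)).
- move=> j l; rewrite inE => /andP[jZ' jT] lZ'.
  have [jZ | jZ] := boolP (j \in Z); last by apply: oZ (subsetP Z'Z _ lZ'); rewrite inE jZ.
  have jP : j \in Z :\: Z' by rewrite inE jZ' jZ.
  have [_ /(_ l (subsetP Z'Z _ lZ'))] := pivot j jP.
  by case=> //; apply: contraNneq jZ' => <-.
move=> c v vT; rewrite mulmxA -/N => vs j x jZ'.
have [jZ | /(vZ _ v vT vs j x) //] := boolP (j \in Z).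
have jP : j \in Z :\: Z' by rewrite inE jZ' jZ.
have [nzj cj] := pivot j jP.
have := vs i0 x (mem_head _ _); rewrite mxE (bigD1 j) //= big1 ?addr0.
  by move/eqP; rewrite mulf_eq0 (negbTE nzj) => /eqP.
move=> l lj; have [lZ | lZ] := boolP (l \in Z); first by rewrite (cj l lZ lj).1 mul0r.
by rewrite (vZ _ v vT vs) ?mulr0.
Qed.

Lemma echelon_exists s : exists U Z, echelon_form s U Z.
Proof.
elim: s => [|i0 s [U [Z /(echelon_cons i0)]]] //.
by exists 1%:M, T; apply: echelon_nil.
Qed.

End Echelon.

Section Compression.
Variables (R : idomainType) (hR : bezout_domain R) (m k : nat).

Lemma col_compress_left (C : 'M[R]_(m, m + k)) :
  exists F (Z : {set 'I_(m + k)}),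
    [/\ F \in unitmx, forall i j, j \in Z -> (C *m F) i j = 0, forall j, rshift m j \in Z &
         forall c (v : 'M[R]_(m + k, c)), C *m F *m v = 0 -> supported Z v].
Proof.
have [F [Z [uF _ _ zF cZ oZ kZ]]] :=
  echelon_exists hR C [set: 'I_(m + k)] (@nat_of_ord _) (enum 'I_m).
exists F, Z; split=> // [i j | j | c v CFv].
- by apply: zF; rewrite mem_enum.
- apply/negPn/negP => jZ; rewrite size_enum_ord in cZ.
  suff : (m < #|[set: 'I_(m + k)] :\: Z|)%N by rewrite ltnNge cZ.
  rewrite -{1}(card_ord m) -(card_imset _ (@lshift_inj m k)).
  apply: (card_lt_pivots oZ (j0 := rshift m j)); rewrite ?inE ?jZ ?subsetT //.
  by move=> _ /imsetP[l _ ->] /=; have := ltn_ord l; lia.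
- by apply: kZ => [j x | i x _]; rewrite ?inE // CFv mxE.
Qed.

Lemma col_compress_right (Y : 'M[R]_(m, k + m)) (Z : {set 'I_(k + m)}) :
  (forall j, rshift k j \in Z) ->
  exists U, [/\ U \in unitmx, id_outside Z U &
    forall i l, lshift m l \in Z -> (Y *m U) i (lshift m l) = 0].
Proof.
(* Reversed weights push the pivots to the last columns. *)
move=> rZ; have [U [Z' [uU iU Z'Z zY cZ' oZ' _]]] :=
  echelon_exists hR Y Z (fun j => k + m - j)%N (enum 'I_m).
exists U; split=> // i l lZ; apply: zY; rewrite ?mem_enum //.
apply/negPn/negP => lZ'; rewrite size_enum_ord in cZ'.
suff : (m < #|Z :\: Z'|)%N by rewrite ltnNge cZ'.
rewrite -{1}(card_ord m) -(card_imset _ (@rshift_inj k m)).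
apply: (card_lt_pivots oZ' (j0 := lshift m l)); first by rewrite inE lZ' lZ.
  by apply/subsetP => _ /imsetP[j _ ->].
by move=> _ /imsetP[j _ ->] /=; have := ltn_ord l; lia.
Qed.

End Compression.

Section GcdLcm.
Variables (R : idomainType) (n : nat).
Implicit Types A B D X M : 'M[R]_n.

Lemma left_gcd_col_reduction A B D (F : 'M[R]_(n + n)) :
  F \in unitmx -> row_mx A B *m F = row_mx D 0 -> left_gcd A B D.
Proof.
move=> uF ABF; split.
  have AB : row_mx A B = row_mx D 0 *m invmx F by rewrite -ABF mulmxK.
  rewrite -[invmx F]submxK mul_row_block !mul0mx !addr0 in AB.
  by have [-> ->] := eq_row_mx AB; split; eexists.
move=> D' [[A1 hA] [B1 hB]]; exists (lsubmx (row_mx A1 B1 *m F)).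
by rewrite mulmx_lsub mulmxA mul_mx_row -hA -hB ABF row_mxKl.
Qed.

Lemma right_lcm_col_reduction A B D X M (F : 'M[R]_(n + n)) :
  F \in unitmx -> row_mx A B *m F = row_mx D 0 -> row_mx 0 B *m F = row_mx X M ->
  (forall u : 'M[R]_n, D *m u = 0 -> X *m u = 0) -> right_lcm A B M.
Proof.
move=> uF ABF BF kerDX; split.
  set G := rsubmx F.
  have AGBG : A *m usubmx G + B *m dsubmx G = 0.
    by rewrite -mul_row_col vsubmxK mulmx_rsub ABF row_mxKr.
  have -> : M = B *m dsubmx G.
    by rewrite -(row_mxKr X M) -BF -mulmx_rsub -/G -{1}[G]vsubmxK mul_row_col mul0mx add0r.
  exists (- usubmx G), (dsubmx G); split=> //.
  by rewrite mulmxN; apply/eqP; rewrite -addr_eq0 addrC AGBG.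
move=> M' [P [Q [hP hQ]]].
pose V := invmx F *m col_mx P (- Q).
have FV : F *m V = col_mx P (- Q) by rewrite mulKVmx.
have DV : D *m usubmx V = 0.
  have : row_mx A B *m F *m V = 0 by rewrite -mulmxA FV mul_row_col mulmxN -hP -hQ subrr.
  by rewrite ABF -{1}[V]vsubmxK mul_row_col mul0mx addr0.
exists (- dsubmx V).
have : row_mx 0 B *m F *m V = - M' by rewrite -mulmxA FV mul_row_col mul0mx add0r mulmxN hQ.
by rewrite BF -{1}[V]vsubmxK mul_row_col kerDX // add0r mulmxN => ->; rewrite opprK.
Qed.

End GcdLcm.

Lemma block_col_reduction (R : idomainType) (hR : bezout_domain R) n (A B : 'M[R]_n) :
  exists F (D X M : 'M[R]_n), [/\ F \in unitmx, row_mx A B *m F = row_mx D 0,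
    row_mx 0 B *m F = row_mx X M & forall u : 'M[R]_n, D *m u = 0 -> X *m u = 0].
Proof.
have [F1 [Z [uF1 EZ rZ kerE]]] := col_compress_left hR (row_mx A B).
have [U [uU iU YZ]] := col_compress_right hR (row_mx 0 B *m F1) rZ.
set E := row_mx A B *m F1 in EZ kerE *.
have EU : E *m U = E.
  apply/matrixP => i j; have [jZ | jZ] := boolP (j \in Z).
    by rewrite EZ // (mulmx_id_outside_zero iU) // => l; apply: EZ.
  by rewrite (mulmx_id_outside_col _ _ iU jZ).
have ED : E = row_mx (lsubmx E) 0.
  rewrite -[LHS]hsubmxK; congr row_mx.
  by apply/matrixP => i j; rewrite [LHS]mxE [RHS]mxE EZ.
set Y := row_mx 0 B *m F1 *m U in YZ.
exists (F1 *m U), (lsubmx E), (lsubmx Y), (rsubmx Y); split.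
- by rewrite unitmx_mul uF1.
- by rewrite mulmxA -/E EU.
- by rewrite mulmxA hsubmxK.
move=> u Du; have vZ : supported Z (U *m col_mx u 0).
  by apply: kerE; rewrite mulmxA EU {1}ED mul_row_col mul0mx addr0 Du.
have -> : lsubmx Y *m u = Y *m col_mx u 0.
  by rewrite -{2}[Y]hsubmxK mul_row_col mulmx0 addr0.
apply/matrixP => i x; rewrite mxE [RHS]mxE big1 // => j _.
rewrite -(splitK j); case: (split j) => l /=; last first.
  by rewrite col_mxEd [X in _ * X]mxE mulr0.
have [lZ | lZ] := boolP (lshift n l \in Z); first by rewrite YZ ?mul0r.
by rewrite -(id_outside_mulmx_row _ x iU lZ) vZ ?mulr0.
Qed.

Theorem theorem1p18 (R : idomainType) (hR : bezout_domain R) (n : nat)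
    (A B : 'M[R]_n) :
  exists F : 'M[R]_(n + n), F \in unitmx /\
    exists (D M X : 'M[R]_n),
      block_mx A B 0 B *m F = block_mx D 0 X M /\
      left_gcd A B D /\ right_lcm A B M.
Proof.
have [F [D [X [M [uF ABF BF kerDX]]]]] := block_col_reduction hR A B.
exists F; split=> //; exists D, M, X; split.
  by rewrite block_mxEv mul_col_mx ABF BF -block_mxEv.
split; first exact: left_gcd_col_reduction uF ABF.
exact: right_lcm_col_reduction uF ABF BF kerDX.
Qed.
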